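(* Let $a>0$, $g>0$, $l_{\mathrm{c}}>0$, $c_{\infty}>0$ and $c_{\mathrm{s}}\ge 0$ be constants. Consider pairs $(l_{\infty},c)$ with $l_{\infty}>0$ and $c$ continuously differentiable on $[0,l_{\infty})$ with left limit $c^-:=\lim_{x\nearrow l_{\infty}}c(x)$, satisfying \[ -a c'(x)-g c(x)=0\ (0<x<l_{\infty}),\qquad a c^-=g l_{\mathrm{c}} c_{\infty},\qquad c(0)=c_{\mathrm{s}} \] (steady-state solutions). Such a pair exists if and only if $c_{\mathrm{s}}>c_{\infty} g l_{\mathrm{c}}/a$, and in that case it is unique and given by \[ c(x)=c_{\mathrm{s}}\mathrm{e}^{-gx/a},\qquad l_{\infty}=\frac{a}{g}\log\frac{a c_{\mathrm{s}}}{g l_{\mathrm{c}} c_{\infty}}. \]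
   Context: This is the steady-state problem of a one-dimensional axonal growth model with no diffusion ($D=0$), in which the tubulin concentration along the axon is not required to be continuous at the axon tip $x=l_{\infty}$ (the growth cone concentration is $c_{\infty}$, while $c^-$ is the concentration just inside the axon). Here $a$ is the active transport velocity, $g$ the degradation rate, $l_{\mathrm{c}}$ the characteristic growth-cone length, $c_{\mathrm{s}}$ the soma concentration, and $l_{\infty}$ the axon length. *)

From Stdlib Require Import Reals.
From Coquelicot Require Import Coquelicot.
Open Scope R_scope.

Definition C1_on_0l (l : R) (c : R -> R) : Prop :=
  exists dc : R -> R,
    (forall x, 0 < x < l -> is_derive c x (dc x)) /\
    filterlim (fun h => (c h - c 0) / h) (at_right 0) (locally (dc 0)) /\
    (forall x, 0 < x < l -> continuous dc x) /\
    filterlim dc (at_right 0) (locally (dc 0)).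

(* Steady-state solution (l_inf, c) of the D = 0 model with possibly
   discontinuous tip concentration. *)
Definition steady_state (a g lc cinf cs : R) (l : R) (c : R -> R) : Prop :=
  0 < l /\
  C1_on_0l l c /\
  (exists cm : R,
      filterlim c (at_left l) (locally cm) /\
      a * cm = g * lc * cinf) /\
  (forall x, 0 < x < l -> - a * Derive c x - g * c x = 0) /\
  c 0 = cs.

(* Multiplying a solution of [a c' + g c = 0] by [exp (g x / a)] gives a
   function with zero derivative, so every steady state is the decaying
   exponential [c x = cs * exp (- g x / a)].  The tip condition then reads
   [a cs exp (- g l / a) = g lc cinf]; since the exponential takes every value
   in (0, 1) exactly once for [l > 0], this equation has a positive solution
   [l] exactly when [a cs > g lc cinf], and that solution is unique. *)
From Stdlib Require Import Reals Lra.
From Coquelicot Require Import Coquelicot.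
Open Scope R_scope.

Lemma filterlim_Rmult_fun F {FF : Filter F} (f g : R -> R) (x y : R) :
  filterlim f F (locally x) -> filterlim g F (locally y) ->
  filterlim (fun t => f t * g t) F (locally (x * y)).
Proof.
  intros Hf Hg; apply (filterlim_comp_2 f g Rmult Hf Hg).
  exact (@filterlim_mult R_AbsRing x y).
Qed.

Lemma filterlim_Rplus_fun F {FF : Filter F} (f g : R -> R) (x y : R) :
  filterlim f F (locally x) -> filterlim g F (locally y) ->
  filterlim (fun t => f t + g t) F (locally (x + y)).
Proof.
  intros Hf Hg; apply (filterlim_comp_2 f g Rplus Hf Hg).
  exact (@filterlim_plus R_AbsRing R_NormedModule x y).
Qed.

Lemma filterlim_within_continuous (f : R -> R) (x : R) (D : R -> Prop) :
  continuous f x -> filterlim f (within D (locally x)) (locally (f x)).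
Proof. intros Hf; eapply filterlim_filter_le_1; [apply filter_le_within | exact Hf]. Qed.

Lemma filterlim_at_right_unique (f : R -> R) (z x y : R) :
  filterlim f (at_right z) (locally x) -> filterlim f (at_right z) (locally y) ->
  x = y.
Proof.
  exact (@filterlim_locally_unique R R_AbsRing R_NormedModule (at_right z)
    (Proper_StrongProper _ (at_right_proper_filter z)) f x y).
Qed.

Lemma filterlim_at_left_unique (f : R -> R) (z x y : R) :
  filterlim f (at_left z) (locally x) -> filterlim f (at_left z) (locally y) ->
  x = y.
Proof.
  exact (@filterlim_locally_unique R R_AbsRing R_NormedModule (at_left z)
    (Proper_StrongProper _ (at_left_proper_filter z)) f x y).
Qed.

Lemma right_continuous_of_right_derivative (c : R -> R) (d : R) :
  filterlim (fun h => (c h - c 0) / h) (at_right 0) (locally d) ->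
  filterlim c (at_right 0) (locally (c 0)).
Proof.
  intros Hq.
  apply filterlim_ext_loc with (fun h => c 0 + h * ((c h - c 0) / h)).
  - exists (mkposreal 1 Rlt_0_1); intros h _ Hh; field; lra.
  - replace (locally (c 0)) with (locally (c 0 + 0 * d)) by (f_equal; ring).
    apply filterlim_Rplus_fun; [apply at_right_proper_filter | apply filterlim_const |].
    apply filterlim_Rmult_fun; [apply at_right_proper_filter | | exact Hq].
    apply (filterlim_within_continuous (fun t => t)), continuous_id.
Qed.

Lemma right_derivative_of_is_derive (f : R -> R) (d : R) :
  is_derive f 0 d -> filterlim (fun h => (f h - f 0) / h) (at_right 0) (locally d).
Proof.
  intros Hd%is_derive_Reals; apply (filterlim_locally (F := at_right 0)).
  intros eps; destruct (Hd eps (cond_pos eps)) as [del Hdel].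
  exists del; intros h Hh Hpos.
  change (Rabs (h - 0) < del) in Hh; rewrite Rminus_0_r in Hh.
  specialize (Hdel h ltac:(lra) Hh); rewrite Rplus_0_l in Hdel; exact Hdel.
Qed.

Lemma zero_derivative_constant (h dh : R -> R) (l x y : R) :
  (forall z, 0 < z < l -> is_derive h z (dh z)) ->
  (forall z, 0 < z < l -> dh z = 0) ->
  0 < y < x -> x < l -> h y = h x.
Proof.
  intros Hd Hd0 Hyx Hxl.
  destruct (MVT_gen h y x dh) as [z [Hz E]];
    rewrite ?Rmin_left, ?Rmax_right in * by lra.
  - intros z Hz; apply Hd; lra.
  - intros z Hz; apply continuity_pt_filterlim, (@ex_derive_continuous R_AbsRing R_NormedModule).
    exists (dh z); apply Hd; lra.
  - rewrite Hd0 in E by lra; lra.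
Qed.

Lemma exp_scaled_continuous (k a x : R) : continuous (fun t => exp (k * t / a)) x.
Proof. apply (@ex_derive_continuous R_AbsRing R_NormedModule); auto_derive; trivial. Qed.

Lemma linear_ode_solution (a g l : R) (c dc : R -> R) : a <> 0 ->
  (forall x, 0 < x < l -> is_derive c x (dc x)) ->
  (forall x, 0 < x < l -> - a * dc x - g * c x = 0) ->
  filterlim c (at_right 0) (locally (c 0)) ->
  forall x, 0 < x < l -> c x = c 0 * exp (- g * x / a).
Proof.
  intros ha Hd Hode Hc x Hx.
  set (h := fun y => c y * exp (g * y / a)).
  assert (Hh : forall y, 0 < y < x -> h y = h x).
  { intros y Hy.
    apply (zero_derivative_constant h
      (fun z => dc z * exp (g * z / a) + c z * (exp (g * z / a) * (g / a))) l);
      [| | lra | lra].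
    - intros z Hz; apply (is_derive_mult c (fun t => exp (g * t / a))).
      + now apply Hd.
      + auto_derive; [trivial | unfold Rdiv; ring].
      + intros; apply Rmult_comm.
    - intros z Hz.
      replace (dc z) with (- g * c z / a) by (specialize (Hode z Hz); field_simplify_eq; lra).
      field; exact ha. }
  assert (Hlim0 : filterlim h (at_right 0) (locally (c 0 * exp (g * 0 / a)))).
  { apply filterlim_Rmult_fun; [apply at_right_proper_filter | exact Hc |].
    apply (filterlim_within_continuous (fun t => exp (g * t / a))), exp_scaled_continuous. }
  assert (Hlimx : filterlim h (at_right 0) (locally (h x))).
  { apply filterlim_ext_loc with (fun _ => h x); [| apply filterlim_const].
    exists (mkposreal x (proj1 Hx)); intros y Hb Hy.
    change (Rabs (y - 0) < x) in Hb; apply Rabs_def2 in Hb.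
    symmetry; apply Hh; lra. }
  pose proof (filterlim_at_right_unique h 0 _ _ Hlim0 Hlimx) as Hx0.
  unfold h in Hx0; rewrite Rmult_0_r, Rdiv_0_l, exp_0, Rmult_1_r in Hx0.
  rewrite Hx0, Rmult_assoc, <- exp_plus.
  replace (g * x / a + - g * x / a) with 0 by (field; exact ha).
  now rewrite exp_0, Rmult_1_r.
Qed.

Lemma exp_balance_ln (A B k l : R) :
  0 < B -> A * exp (- k * l) = B -> k * l = ln (A / B).
Proof.
  intros HB Hbal.
  assert (HA : A = B * exp (k * l)).
  { rewrite <- Hbal, Rmult_assoc, <- exp_plus.
    replace (- k * l + k * l) with 0 by ring; now rewrite exp_0, Rmult_1_r. }
  rewrite HA; replace (B * exp (k * l) / B) with (exp (k * l)) by (field; lra).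
  now rewrite ln_exp.
Qed.

Lemma exp_balance_lt (A B k l : R) :
  0 < k -> 0 < l -> 0 < B -> A * exp (- k * l) = B -> B < A.
Proof.
  intros Hk Hl HB Hbal.
  assert (HE : exp (- k * l) < 1).
  { rewrite <- exp_0; apply exp_increasing; nra. }
  pose proof (exp_pos (- k * l)).
  assert (0 < A) by nra.
  nra.
Qed.

Section SteadyState.

Variables a g lc cinf cs : R.
Hypotheses (ha : 0 < a) (hg : 0 < g) (hlc : 0 < lc) (hcinf : 0 < cinf).

Let profile (x : R) : R := cs * exp (- g * x / a).

Lemma profile_derive (x : R) : is_derive profile x (- g / a * profile x).
Proof. unfold profile; auto_derive; [trivial | unfold Rdiv; ring]. Qed.

Lemma profile_continuous (x : R) : continuous profile x.
Proof. apply (@ex_derive_continuous R_AbsRing R_NormedModule); eexists; apply profile_derive. Qed.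

Lemma steady_state_profile (l : R) (c : R -> R) :
  steady_state a g lc cinf cs l c -> forall x, 0 <= x < l -> c x = profile x.
Proof.
  intros [_ [[dc [Hd [Hq _]]] [_ [Hode Hc0]]]] x [[Hx | <-] Hxl]; unfold profile.
  - rewrite <- Hc0.
    apply (linear_ode_solution a g l c dc); [lra | exact Hd | | | lra].
    + intros y Hy; rewrite <- (is_derive_unique c y (dc y) (Hd y Hy)); now apply Hode.
    + exact (right_continuous_of_right_derivative c (dc 0) Hq).
  - rewrite Rmult_0_r, Rdiv_0_l, exp_0; lra.
Qed.

Lemma steady_state_tip (l : R) (c : R -> R) :
  steady_state a g lc cinf cs l c -> a * cs * exp (- (g / a) * l) = g * lc * cinf.
Proof.
  intros Hss; pose proof (steady_state_profile l c Hss) as Hprof.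
  destruct Hss as [Hl [_ [[cm [Hcm Hbal]] _]]].
  assert (Htip : filterlim c (at_left l) (locally (profile l))).
  { apply filterlim_ext_loc with profile.
    - exists (mkposreal l Hl); intros y Hb Hy.
      change (Rabs (y - l) < l) in Hb; apply Rabs_def2 in Hb; simpl in Hb.
      symmetry; apply Hprof; lra.
    - apply filterlim_within_continuous, profile_continuous. }
  rewrite (filterlim_at_left_unique c l _ _ Hcm Htip) in Hbal.
  rewrite <- Hbal; unfold profile.
  replace (- (g / a) * l) with (- g * l / a) by (field; lra); ring.
Qed.

Let length : R := a / g * ln (a * cs / (g * lc * cinf)).

Lemma steady_state_unique (l : R) (c : R -> R) :
  steady_state a g lc cinf cs l c ->
  cs > cinf * g * lc / a /\ l = length /\ (forall x, 0 <= x < l -> c x = profile x).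
Proof.
  intros Hss; pose proof (steady_state_tip l c Hss) as Htip.
  assert (HK : 0 < g * lc * cinf) by (apply Rmult_lt_0_compat; [nra | lra]).
  assert (Hl : 0 < l) by apply Hss.
  split; [| split; [| exact (steady_state_profile l c Hss)]].
  - pose proof (exp_balance_lt _ _ (g / a) l (Rdiv_lt_0_compat g a hg ha) Hl HK Htip) as Hgap.
    apply Rlt_gt, (Rmult_lt_reg_l a); [exact ha |].
    replace (a * (cinf * g * lc / a)) with (g * lc * cinf) by (field; lra); exact Hgap.
  - unfold length; rewrite <- (exp_balance_ln _ _ (g / a) l HK Htip); field; lra.
Qed.

Lemma steady_state_exists :
  cs > cinf * g * lc / a -> steady_state a g lc cinf cs length profile.
Proof.
  intros Hcs.
  assert (HK : 0 < g * lc * cinf) by (apply Rmult_lt_0_compat; [nra | lra]).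
  assert (Hgap : g * lc * cinf < a * cs).
  { apply (Rmult_lt_compat_l a) in Hcs; [| exact ha].
    replace (a * (cinf * g * lc / a)) with (g * lc * cinf) in Hcs by (field; lra); lra. }
  assert (Hratio : 1 < a * cs / (g * lc * cinf)).
  { apply (Rmult_lt_reg_l (g * lc * cinf)); [exact HK |].
    replace (g * lc * cinf * (a * cs / (g * lc * cinf))) with (a * cs) by (field; lra).
    lra. }
  assert (Hdc : forall x, continuous (fun y => - g / a * profile y) x).
  { intros x; apply (continuous_scal_r (- g / a) profile x), profile_continuous. }
  split; [| split; [| split; [| split]]].
  - apply Rmult_lt_0_compat; [apply Rdiv_lt_0_compat; lra |].
    rewrite <- ln_1; apply ln_increasing; lra.
  - exists (fun y => - g / a * profile y); split; [| split; [| split]].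
    + intros x _; apply profile_derive.
    + apply right_derivative_of_is_derive, profile_derive.
    + intros x _; apply Hdc.
    + apply (filterlim_within_continuous (fun y => - g / a * profile y)), Hdc.
  - exists (profile length); split.
    + apply (filterlim_within_continuous profile), profile_continuous.
    + unfold profile, length.
      replace (- g * (a / g * ln (a * cs / (g * lc * cinf))) / a)
        with (- ln (a * cs / (g * lc * cinf))) by (field; lra).
      rewrite exp_Ropp, exp_ln by lra.
      assert (0 < cs) by nra; field; lra.
  - intros x _; rewrite (is_derive_unique _ _ _ (profile_derive x)); field; lra.
  - unfold profile; rewrite Rmult_0_r, Rdiv_0_l, exp_0; ring.
Qed.

End SteadyState.

Theorem theorem4 (a g lc cinf cs : R)
  (ha : 0 < a) (hg : 0 < g) (hlc : 0 < lc) (hcinf : 0 < cinf) (hcs : 0 <= cs) :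
  ((exists (l : R) (c : R -> R), steady_state a g lc cinf cs l c) <->
     cs > cinf * g * lc / a) /\
  (cs > cinf * g * lc / a ->
     forall (l : R) (c : R -> R), steady_state a g lc cinf cs l c ->
       l = a / g * ln (a * cs / (g * lc * cinf)) /\
       (forall x, 0 <= x < l -> c x = cs * exp (- g * x / a))).
Proof.
  split; [split |].
  - intros [l [c Hss]]; exact (proj1 (steady_state_unique a g lc cinf cs ha hg hlc hcinf l c Hss)).
  - intros Hcs; do 2 eexists; exact (steady_state_exists a g lc cinf cs ha hg hlc hcinf Hcs).
  - intros _ l c Hss; exact (proj2 (steady_state_unique a g lc cinf cs ha hg hlc hcinf l c Hss)).
Qed.
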